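(* Let $X,A^0,\dots,A^{d-1}\in\mathcal{M}_D(\mathbb{C})$ and for $N\ge1$ let $|\psi_N(X,A)\rangle=\sum_{i_1,\dots,i_N=0}^{d-1}\mathrm{Tr}[XA^{i_1}A^{i_2}\cdots A^{i_N}]\,|i_1i_2\cdots i_N\rangle$. Then $|\psi_N(X,A)\rangle$ is translationally invariant for every $N\ge1$ if and only if $$\mathrm{Tr}\big[X[a,b]\big]=0\quad\text{for all }a,b\in\mathrm{Alg}(\{A^i\}).$$
   Context: A state $|\psi\rangle\in(\mathbb{C}^d)^{\otimes N}$ is translationally invariant if $T|\psi\rangle=|\psi\rangle$, where $T|i_1i_2\cdots i_N\rangle=|i_2\cdots i_Ni_1\rangle$ is the cyclic shift. $[a,b]=ab-ba$. $\mathrm{Alg}(\{A^i\})$ is the linear span of all finite products $A^{i_1}\cdots A^{i_k}$ with $k\ge1$. *)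

From HB Require Import structures.
From mathcomp Require Import all_boot all_order all_algebra.
Set Implicit Arguments. Unset Strict Implicit. Unset Printing Implicit Defensive.
Import GRing.Theory.
Local Open Scope ring_scope.

Definition mxprod (C : fieldType) (D : nat) (s : seq 'M[C]_D) : 'M[C]_D :=
  foldr (@mulmx C D D D) 1%:M s.

(* A vector of (C^d)^{\otimes N}, given by its coefficients in the
   computational basis |i_1 ... i_N>, indexed by N-tuples of 'I_d. *)
Definition state (C : fieldType) (d N : nat) := N.-tuple 'I_d -> C.

(* Cyclic shift T |i1 i2 ... iN> = |i2 ... iN i1>, extended linearly:
   the coefficient of T psi at basis vector j is the coefficient of psi at
   the basis vector t with rot 1 t = j, i.e. t = rotr 1 j. *)
Definition shiftT (C : fieldType) (d N : nat) (psi : state C d N) : state C d N :=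
  fun j => psi [tuple of rotr 1 j].

Definition transl_inv (C : fieldType) (d N : nat) (psi : state C d N) : Prop :=
  forall j, shiftT psi j = psi j.

Definition psiN (C : fieldType) (d D N : nat) (X : 'M[C]_D)
  (A : 'I_d -> 'M[C]_D) : state C d N :=
  fun i => \tr (X *m mxprod (map A (tval i))).

Definition inAlg (C : fieldType) (d D : nat) (A : 'I_d -> 'M[C]_D)
  (a : 'M[C]_D) : Prop :=
  exists s : seq (C * seq 'I_d),
    all (fun p => 0 < size p.2)%N s /\
    a = \sum_(p <- s) p.1 *: mxprod (map A p.2).

From HB Require Import structures.
From mathcomp Require Import all_boot all_order all_algebra.
Set Implicit Arguments. Unset Strict Implicit. Unset Printing Implicit Defensive.
Import GRing.Theory.
Local Open Scope ring_scope.

(* Translational invariance of every psi_N says that w |-> Tr[X A^w] is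
   invariant under cyclic rotation of words, i.e. Tr[X A^u A^v] = Tr[X A^v A^u]
   for all words u, v.  Since a |-> Tr[X [a, b]] is linear in a and
   antisymmetric in (a, b), this extends from words to their span Alg({A^i});
   conversely a rotation is the special case u = one letter. *)

Lemma mxprod_cat (C : fieldType) (D : nat) (s1 s2 : seq 'M[C]_D) :
  mxprod (s1 ++ s2) = mxprod s1 *m mxprod s2.
Proof.
elim: s1 => [|x s IH] /=; first by rewrite mul1mx.
by rewrite /mxprod /= -/(mxprod _) IH mulmxA.
Qed.

Lemma rotr1_inv_catC (T R : Type) (f : seq T -> R) :
  (forall s, f (rotr 1 s) = f s) -> forall s1 s2, f (s1 ++ s2) = f (s2 ++ s1).
Proof.
move=> f_rotr; have f_rot s : f (rot 1 s) = f s by rewrite -{2}(rotK 1 s).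
elim=> [|x s1 IH] s2; first by rewrite cats0.
by rewrite -f_rot rot1_cons rcons_cat IH cat_rcons.
Qed.

Section TraceCommutator.

Variables (C : fieldType) (D : nat) (X : 'M[C]_D).

Definition trX_comm (a b : 'M[C]_D) := \tr (X *m (a *m b - b *m a)).

Lemma trX_commC a b : trX_comm b a = - trX_comm a b.
Proof. by rewrite /trX_comm -opprB mulmxN raddfN. Qed.

Lemma trX_comm1m a : trX_comm 1%:M a = 0.
Proof. by rewrite /trX_comm mul1mx mulmx1 subrr mulmx0 mxtrace0. Qed.

Lemma trX_comm_eq0 a b : trX_comm a b = 0 <->
  \tr (X *m (a *m b)) = \tr (X *m (b *m a)).
Proof.
rewrite /trX_comm mulmxBr mxtraceD raddfN /=.
by split=> [/eqP | ->]; [rewrite subr_eq0 => /eqP | rewrite subrr].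
Qed.

Lemma trX_comm_suml (I : Type) (c : I -> C) (g : I -> 'M[C]_D) s b :
  (forall i, trX_comm (g i) b = 0) ->
  trX_comm (\sum_(i <- s) c i *: g i) b = 0.
Proof.
move=> gb0; rewrite /trX_comm mulmx_suml mulmx_sumr -sumrB mulmx_sumr.
rewrite (big_morph _ (@mxtraceD _ _) (mxtrace0 _ _)) big1 // => i _.
rewrite -scalemxAl -scalemxAr -scalerBr -scalemxAr mxtraceZ.
by rewrite -/(trX_comm _ _) gb0 mulr0.
Qed.

Lemma trX_comm_span (I J : Type) (c : I -> C) (g : I -> 'M[C]_D)
    (e : J -> C) (h : J -> 'M[C]_D) s t :
  (forall i j, trX_comm (g i) (h j) = 0) ->
  trX_comm (\sum_(i <- s) c i *: g i) (\sum_(j <- t) e j *: h j) = 0.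
Proof.
move=> gh0; apply: trX_comm_suml => i.
by rewrite trX_commC trX_comm_suml ?oppr0 // => j; rewrite trX_commC gh0 oppr0.
Qed.

End TraceCommutator.

Section WordTrace.

Variables (C : fieldType) (d D : nat) (X : 'M[C]_D) (A : 'I_d -> 'M[C]_D).

Definition word (w : seq 'I_d) := mxprod (map A w).

Definition word_trace (w : seq 'I_d) := \tr (X *m word w).

Lemma word_cat u v : word (u ++ v) = word u *m word v.
Proof. by rewrite /word map_cat mxprod_cat. Qed.

Lemma inAlg_word w : (0 < size w)%N -> inAlg A (word w).
Proof. by move=> w_gt0; exists [:: (1, w)]; rewrite big_seq1 scale1r /= w_gt0. Qed.

Lemma transl_inv_psiN_iff :
  (forall N, (1 <= N)%N -> transl_inv (@psiN C d D N X A)) <->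
  (forall w, word_trace (rotr 1 w) = word_trace w).
Proof.
split=> [inv [|x w] // | inv N _ t]; last exact: inv.
exact: (inv (size (x :: w)) isT (in_tuple (x :: w))).
Qed.

Lemma trX_comm_words_rotr :
  (forall u v, trX_comm X (word u) (word v) = 0) <->
  (forall w, word_trace (rotr 1 w) = word_trace w).
Proof.
split=> [comm0 w | /rotr1_inv_catC catC u v].
  case/lastP: w => [|w x] //.
  rewrite rotr1_rcons -cats1 -cat1s /word_trace !word_cat.
  by apply/trX_comm_eq0; rewrite trX_commC comm0 oppr0.
by apply/trX_comm_eq0; rewrite -!word_cat; apply: catC.
Qed.

End WordTrace.

Theorem lemma3 (C : numClosedFieldType) (d D : nat) (X : 'M[C]_D)
  (A : 'I_d -> 'M[C]_D) :
  (forall N : nat, (1 <= N)%N -> transl_inv (@psiN C d D N X A)) <->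
  (forall a b : 'M[C]_D, inAlg A a -> inAlg A b ->
     \tr (X *m (a *m b - b *m a)) = 0).
Proof.
apply: (iff_trans (transl_inv_psiN_iff X A)).
apply: (iff_trans (iff_sym (trX_comm_words_rotr X A))).
split=> [words0 a b [sa [_ ->]] [sb [_ ->]] | alg0 [|x u] [|y v]].
- by apply: trX_comm_span => p q; apply: words0.
- exact: trX_comm1m.
- exact: trX_comm1m.
- by rewrite trX_commC trX_comm1m oppr0.
- exact: alg0 (inAlg_word _ _) (inAlg_word _ _).
Qed.
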